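(* Let $\mathcal{U}$ be an update family on $\mathbb{Z}$ for which $-1$ is a stable direction (i.e. no $X\in\mathcal{U}$ satisfies $X\subset\{1,2,3,\dots\}$). Then for every $n\in\mathbb{N}$, every $\Lambda\subset\mathbb{Z}$ with $\{-r(2^n-1),\dots,rn2^{n-1}\}\subset\Lambda$, and every $\eta\in V(n,\Lambda)$, one has $\eta_0=1$.
   Context: An update family is a set $\mathcal{U}$ of finitely many finite nonempty subsets of $\mathbb{Z}\setminus\{0\}$, and $r=\max\{|x-y| : x,y\in X\cup\{0\}, X\in\mathcal{U}\}$. For $\Lambda\subset\mathbb{Z}$, configurations are elements of $\{0,1\}^\Lambda$; $1_\Lambda$ is the all-ones configuration; $\eta^s$ is $\eta$ with the state at $s$ flipped. A move from $\eta$ to $\eta'$ is legal if $\eta'=\eta$, or $\eta'=\eta^s$ for some $s\in\Lambda$ and some $X\in\mathcal{U}$ has all sites of $s+X$ in state $0$ in the configuration equal to $\eta$ on $\Lambda$ and $0$ outside $\Lambda$. A legal path is a finite sequence $(\eta^j)_{0\le j\le m}$, $m\ge1$, with all consecutive moves legal; it is $n$-legal if every $\eta^j$ has at most $n$ zeroes in $\Lambda$. $V(n,\Lambda)$ is the set of configurations reachable from $1_\Lambda$ by an $n$-legal path. *)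

From Stdlib Require Import ZArith List Lia.
Import ListNotations.
Open Scope Z_scope.

Definition update_family := list (list Z).

Definition is_update_family (U : update_family) : Prop :=
  forall X, In X U -> X <> [] /\ ~ In 0 X.

(* r = max { |x - y| : x, y in X u {0}, X in U }  (0 if U is empty). *)
Definition range_of_set (X : list Z) : Z :=
  fold_right Z.max 0
    (flat_map (fun x => map (fun y => Z.abs (x - y)) (0 :: X)) (0 :: X)).

Definition range_r (U : update_family) : Z :=
  fold_right Z.max 0 (map range_of_set U).

(* Sites: Lam : Z -> Prop is the (possibly infinite) set Lambda.
   Configurations: eta : Z -> bool, only values on Lam matter
   (true = state 1, false = state 0). *)
Definition config := Z -> bool.

Definition conf_eq (Lam : Z -> Prop) (eta eta' : config) : Prop :=
  forall x, Lam x -> eta x = eta' x.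

(* Site x is in state 0 in the configuration equal to eta on Lam and 0 outside. *)
Definition zero_ext (Lam : Z -> Prop) (eta : config) (x : Z) : Prop :=
  (Lam x /\ eta x = false) \/ ~ Lam x.

Definition is_flip (Lam : Z -> Prop) (eta eta' : config) (s : Z) : Prop :=
  eta' s = negb (eta s) /\ forall x, Lam x -> x <> s -> eta' x = eta x.

Definition legal_move (U : update_family) (Lam : Z -> Prop) (eta eta' : config) : Prop :=
  conf_eq Lam eta eta' \/
  exists s, Lam s /\ is_flip Lam eta eta' s /\
    exists X, In X U /\ forall x, In x X -> zero_ext Lam eta (s + x).

Definition at_most_zeroes (Lam : Z -> Prop) (n : nat) (eta : config) : Prop :=
  exists l : list Z, (length l <= n)%nat /\
    forall x, Lam x -> eta x = false -> In x l.

Definition V (U : update_family) (n : nat) (Lam : Z -> Prop) (eta : config) : Prop :=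
  exists (m : nat) (p : nat -> config),
    (1 <= m)%nat /\
    conf_eq Lam (p 0%nat) (fun _ => true) /\
    conf_eq Lam (p m) eta /\
    (forall j, (j < m)%nat -> legal_move U Lam (p j) (p (S j))) /\
    (forall j, (j <= m)%nat -> at_most_zeroes Lam n (p j)).

Definition minus_one_stable (U : update_family) : Prop :=
  ~ exists X, In X U /\ forall x, In x X -> 0 < x.

From Stdlib Require Import ZArith List Lia Classical.
Import ListNotations.
Open Scope Z_scope.

(* Since -1 is stable, every rule X contains a site in [-r, -1], so a site can
   only change state while some site at most r to its left is 0 (sites outside
   Lambda count as 0).  Let d_n = r (2^n - 1).  By induction on n, along an
   n-legal path from 1_Lambda a site y with [y - d_n, y] inside Lambda is never 0;
   for y = 0 this only uses the left part of the window in the theorem.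

   For the step, split [y - d_(n+1), y] into a left block of length d_n + r and
   the right block containing y, and take the last time t at which the left
   block is all 1.  After t the left block always holds a zero, so the rest of
   the path, restricted to the sites outside it that are 1 at time t, has at
   most n zeroes, and the induction hypothesis keeps y at 1 provided the right
   block is all 1 at time t.  This follows from the same argument run backwards
   in time: otherwise let s < t be the last time the right block is all 1; the
   site that flips at s + 1 needs a zero w in the left block at time s, whereas
   the reversed path from t down to s + 1, restricted outside the right block,
   has at most n zeroes and starts with the left block all 1, so w is 1 at
   time s + 1. *)

Lemma exists_last_index (P : nat -> Prop) (j : nat) : P 0%nat ->
  exists t, (t <= j)%nat /\ P t /\ forall u, (t < u <= j)%nat -> ~ P u.
Proof.
  intros H0. induction j as [|j IH].
  - exists 0%nat. split; [lia|]. split; [exact H0|]. intros u Hu; lia.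
  - destruct (classic (P (S j))) as [HS|HS].
    + exists (S j). split; [lia|]. split; [exact HS|]. intros u Hu; lia.
    + destruct IH as [t [Ht [Pt Hafter]]]. exists t. split; [lia|]. split; [exact Pt|].
      intros u Hu. destruct (Nat.eq_dec u (S j)) as [->|Hne]; [exact HS|].
      apply Hafter; lia.
Qed.

Lemma fold_right_max_ub (l : list Z) (x : Z) : In x l -> x <= fold_right Z.max 0 l.
Proof.
  induction l as [|a l IH]; simpl; intros Hx; [contradiction|].
  destruct Hx as [->|Hx]; [lia|]. specialize (IH Hx). lia.
Qed.

Lemma fold_right_max_nonneg (l : list Z) : 0 <= fold_right Z.max 0 l.
Proof. induction l; simpl; lia. Qed.

Lemma abs_le_range_of_set (X : list Z) (x : Z) : In x X -> Z.abs x <= range_of_set X.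
Proof.
  intros Hx. apply fold_right_max_ub, in_flat_map. exists x. split; [right; exact Hx|].
  replace (Z.abs x) with (Z.abs (x - 0)) by (f_equal; lia).
  apply (in_map (fun y => Z.abs (x - y))). left; reflexivity.
Qed.

Lemma range_of_set_le_range_r (U : update_family) (X : list Z) :
  In X U -> range_of_set X <= range_r U.
Proof. intros HX. apply fold_right_max_ub, in_map, HX. Qed.

Lemma range_r_nonneg (U : update_family) : 0 <= range_r U.
Proof. apply fold_right_max_nonneg. Qed.

Lemma minus_one_stable_left_site (U : update_family) :
  is_update_family U -> minus_one_stable U ->
  forall X, In X U -> exists x, In x X /\ - range_r U <= x <= -1.
Proof.
  intros HU Hstab X HX.
  destruct (classic (exists x, In x X /\ x <= 0)) as [[x [Hx Hle]]|Hpos].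
  - exists x. split; [exact Hx|].
    assert (x <> 0) by (intros ->; apply (proj2 (HU X HX)), Hx).
    pose proof (abs_le_range_of_set X x Hx). pose proof (range_of_set_le_range_r U X HX).
    lia.
  - exfalso. apply Hstab. exists X. split; [exact HX|]. intros x Hx.
    destruct (Z_le_gt_dec x 0); [exfalso; apply Hpos; eauto | lia].
Qed.

Definition ones_on (e : config) (lo hi : Z) : Prop :=
  forall z, lo <= z <= hi -> e z = true.

Lemma not_ones_on (e : config) (lo hi : Z) :
  ~ ones_on e lo hi -> exists z, lo <= z <= hi /\ e z = false.
Proof.
  intros Hn. apply NNPP. intros Hno. apply Hn. intros z Hz.
  destruct (e z) eqn:Ez; [reflexivity|]. exfalso. apply Hno. eauto.
Qed.

Lemma legal_move_sym (U : update_family) (Lam : Z -> Prop) (e e' : config) :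
  (forall X, In X U -> ~ In 0 X) ->
  legal_move U Lam e e' -> legal_move U Lam e' e.
Proof.
  intros H0 [Heq | [s [Hs [[Hfs Hfo] [X [HX Hz]]]]]].
  - left; intros x Hx; symmetry; apply Heq, Hx.
  - right; exists s; split; [exact Hs|]; split.
    + split; [rewrite Hfs; destruct (e s); reflexivity|].
      intros x Hx Hxs; symmetry; apply Hfo; assumption.
    + exists X; split; [exact HX|]; intros x Hx.
      destruct (Hz x Hx) as [[Hl Hf]|Hl]; [left | right; exact Hl].
      split; [exact Hl|]. rewrite Hfo; [exact Hf | exact Hl |].
      intros Hsx. apply (H0 X HX). replace 0 with x by lia. exact Hx.
Qed.

Lemma legal_move_restrict (U : update_family) (Lam Lam' : Z -> Prop) (e e' : config) :
  (forall z, Lam' z -> Lam z) ->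
  legal_move U Lam e e' -> legal_move U Lam' e e'.
Proof.
  intros Hsub [Heq | [s [Hs [[Hfs Hfo] [X [HX Hz]]]]]].
  - left; intros x Hx; apply Heq, Hsub, Hx.
  - destruct (classic (Lam' s)) as [Hs'|Hs'].
    + right; exists s; split; [exact Hs'|]; split.
      * split; [exact Hfs|]. intros x Hx; apply Hfo, Hsub, Hx.
      * exists X; split; [exact HX|]; intros x Hx.
        destruct (Hz x Hx) as [[Hl Hf]|Hl].
        -- destruct (classic (Lam' (s + x))); [left; split | right]; assumption.
        -- right; intros Hl'; apply Hl, Hsub, Hl'.
    + left; intros x Hx. symmetry. apply Hfo; [apply Hsub, Hx|].
      intros ->; contradiction.
Qed.

Lemma legal_move_single_change (U : update_family) (Lam : Z -> Prop) (e e' : config)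
  (z w : Z) :
  legal_move U Lam e e' -> Lam z -> e z <> e' z -> Lam w -> w <> z -> e' w = e w.
Proof.
  intros [Heq | [s [Hs [[Hfs Hfo] _]]]] Hz Hne Hw Hwz.
  - exfalso; apply Hne, Heq, Hz.
  - destruct (Z.eq_dec z s) as [->|Hzs]; [apply Hfo; assumption|].
    exfalso; apply Hne. symmetry; apply Hfo; assumption.
Qed.

Lemma legal_move_left_zero (U : update_family) (Lam : Z -> Prop) (e e' : config)
  (r z : Z) :
  (forall X, In X U -> exists x, In x X /\ - r <= x <= -1) ->
  legal_move U Lam e e' -> Lam z -> e z <> e' z ->
  exists w, z - r <= w <= z - 1 /\ zero_ext Lam e w.
Proof.
  intros Hleft [Heq | [s [Hs [[Hfs Hfo] [X [HX Hz]]]]]] Hl Hne.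
  - exfalso; apply Hne, Heq, Hl.
  - destruct (Z.eq_dec z s) as [->|Hzs].
    + destruct (Hleft X HX) as [x [Hx Hb]]. exists (s + x). split; [lia|]. apply Hz, Hx.
    + exfalso; apply Hne. symmetry; apply Hfo; assumption.
Qed.

Lemma at_most_zeroes_remove (Lam Lam' : Z -> Prop) (k : nat) (e : config) (z0 : Z) :
  (forall z, Lam' z -> Lam z) -> Lam z0 -> ~ Lam' z0 -> e z0 = false ->
  at_most_zeroes Lam (S k) e -> at_most_zeroes Lam' k e.
Proof.
  intros Hsub Hz0 Hn Hf [l [Hl Hin]].
  exists (remove Z.eq_dec z0 l). split.
  - pose proof (remove_length_lt Z.eq_dec l z0 (Hin z0 Hz0 Hf)). lia.
  - intros x Hx Hex. apply in_in_remove.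
    + intros ->; contradiction.
    + apply Hin; [apply Hsub, Hx | exact Hex].
Qed.

Definition legal_path (U : update_family) (Lam : Z -> Prop) (n m : nat)
  (p : nat -> config) : Prop :=
  (forall j, (j < m)%nat -> legal_move U Lam (p j) (p (S j))) /\
  (forall j, (j <= m)%nat -> at_most_zeroes Lam n (p j)).

Lemma legal_path_forward (U : update_family) (Lam : Z -> Prop) (n m : nat)
  (p : nat -> config) (t0 t1 : nat) :
  legal_path U Lam n m p -> (t0 <= t1 <= m)%nat ->
  legal_path U Lam n (t1 - t0) (fun i => p (t0 + i)%nat).
Proof.
  intros [Hmoves Hzeroes] Ht. split.
  - intros i Hi. rewrite Nat.add_succ_r. apply Hmoves; lia.
  - intros i Hi. apply Hzeroes; lia.
Qed.

Lemma legal_path_backward (U : update_family) (Lam : Z -> Prop) (n m : nat)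
  (p : nat -> config) (t0 t1 : nat) :
  (forall X, In X U -> ~ In 0 X) ->
  legal_path U Lam n m p -> (t0 <= t1 <= m)%nat ->
  legal_path U Lam n (t1 - t0) (fun i => p (t1 - i)%nat).
Proof.
  intros H0 [Hmoves Hzeroes] Ht. split.
  - intros i Hi. replace (t1 - i)%nat with (S (t1 - S i)) by lia.
    apply legal_move_sym; [exact H0|]. apply Hmoves; lia.
  - intros i Hi. apply Hzeroes; lia.
Qed.

(* Dropping a block B that carries a zero at every time but the first, together
   with the sites that are 0 at the first time, saves one zero and makes the
   path start from all ones. *)
Lemma legal_path_restrict (U : update_family) (Lam B : Z -> Prop) (k m : nat)
  (p : nat -> config) :
  legal_path U Lam (S k) m p ->
  (forall i, (1 <= i <= m)%nat -> exists z, Lam z /\ B z /\ p i z = false) ->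
  legal_path U (fun x => Lam x /\ ~ B x /\ p 0%nat x = true) k m p.
Proof.
  intros [Hmoves Hzeroes] Hblock. split.
  - intros i Hi. apply (legal_move_restrict U Lam); [intros x [Hx _]; exact Hx|].
    apply Hmoves, Hi.
  - intros [|i] Hi.
    + exists []. split; [simpl; lia|]. intros x [_ [_ Hx]] Hf. congruence.
    + destruct (Hblock (S i) ltac:(lia)) as [z0 [Hz0 [HB Hf]]].
      apply (at_most_zeroes_remove Lam _ k _ z0); try assumption.
      * intros x [Hx _]; exact Hx.
      * intros [_ [Hn _]]; contradiction.
      * apply Hzeroes, Hi.
Qed.

Section Protection.

Variables (U : update_family) (r : Z).
Hypothesis r_nonneg : 0 <= r.
Hypothesis left_site : forall X, In X U -> exists x, In x X /\ - r <= x <= -1.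
Hypothesis zero_free : forall X, In X U -> ~ In 0 X.

Fixpoint shield_width (n : nat) : Z :=
  match n with O => 0 | S k => 2 * shield_width k + r end.

Lemma shield_width_nonneg (n : nat) : 0 <= shield_width n.
Proof. induction n; cbn [shield_width]; lia. Qed.

Lemma shield_width_eq (n : nat) : shield_width n = r * (2 ^ Z.of_nat n - 1).
Proof.
  induction n as [|n IH]; [simpl; ring|].
  cbn [shield_width]. rewrite IH, Nat2Z.inj_succ, Z.pow_succ_r by lia. ring.
Qed.

Definition protected (n : nat) : Prop :=
  forall Lam m p, conf_eq Lam (p 0%nat) (fun _ => true) -> legal_path U Lam n m p ->
  forall y, (forall z, y - shield_width n <= z <= y -> Lam z) ->
  forall j, (j <= m)%nat -> p j y = true.

Lemma protected_0 : protected 0.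
Proof.
  intros Lam m p _ [_ Hzeroes] y Hy j Hj.
  destruct (Hzeroes j Hj) as [[|x l] [Hlen Hin]]; [|simpl in Hlen; lia].
  destruct (p j y) eqn:Ey; [reflexivity|].
  exfalso. apply (Hin y); [apply Hy; simpl; lia | exact Ey].
Qed.

Lemma right_block_protected (k : nat) : protected k ->
  forall Lam m p, conf_eq Lam (p 0%nat) (fun _ => true) -> legal_path U Lam (S k) m p ->
  forall a y, a + shield_width k + r <= y -> (forall z, a <= z <= y -> Lam z) ->
  forall j, (j <= m)%nat -> ones_on (p j) a (a + shield_width k + r - 1) ->
  p j y = true.
Proof.
  intros IH Lam m p Hp0 Hpath a y Hay Hlam j Hj Hleft.
  pose proof (shield_width_nonneg k).
  set (c := a + shield_width k + r) in *.
  destruct (p j y) eqn:Ey; [reflexivity|exfalso].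
  destruct (exists_last_index (fun t => ones_on (p t) c y) j) as [s [Hs [Hright Hafter]]].
  { intros z Hz. rewrite (Hp0 z) by (apply Hlam; lia). reflexivity. }
  assert (Hsj : (s < j)%nat).
  { destruct (Nat.eq_dec s j) as [->|]; [|lia]. rewrite (Hright y) in Ey by lia. discriminate. }
  assert (Hzero : forall t, (s < t <= j)%nat -> exists z, c <= z <= y /\ p t z = false)
    by (intros t Ht; apply not_ones_on, Hafter, Ht).
  destruct (Hzero (S s) ltac:(lia)) as [z [Hz Hz1]].
  assert (Hmove : legal_move U Lam (p s) (p (S s))) by (apply (proj1 Hpath); lia).
  assert (Hflip : p s z <> p (S s) z) by (rewrite (Hright z Hz), Hz1; discriminate).
  destruct (legal_move_left_zero U Lam _ _ r z left_site Hmove ltac:(apply Hlam; lia) Hflip)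
    as [w [Hw Hzw]].
  assert (Hws : p s w = false).
  { destruct Hzw as [[_ Hf]|Hout]; [exact Hf|]. exfalso; apply Hout, Hlam; lia. }
  assert (Hwc : w < c).
  { destruct (Z_lt_le_dec w c) as [|Hcw]; [assumption|].
    rewrite (Hright w) in Hws by lia. discriminate. }
  assert (Hws1 : p (S s) w = false).
  { rewrite (legal_move_single_change U Lam _ _ z w Hmove); try (apply Hlam; lia);
      [exact Hws | exact Hflip | lia]. }
  set (q := fun i => p (j - i)%nat).
  assert (Hq : legal_path U (fun x => Lam x /\ ~ (c <= x <= y) /\ q 0%nat x = true)
                 k (j - S s) q).
  { apply (legal_path_restrict U Lam (fun x => c <= x <= y)).
    - apply (legal_path_backward U Lam (S k) m); [exact zero_free | exact Hpath | lia].
    - intros i Hi. destruct (Hzero (j - i)%nat ltac:(lia)) as [z0 [Hz0 Hf0]].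
      exists z0. split; [apply Hlam; lia|]. split; [lia | exact Hf0]. }
  assert (Hback : q (j - S s)%nat w = true).
  { apply (IH _ _ q (fun x Hx => proj2 (proj2 Hx)) Hq w); [|lia].
    intros x Hx. split; [apply Hlam; lia|]. split; [lia|].
    unfold q. rewrite Nat.sub_0_r. apply Hleft. lia. }
  unfold q in Hback. replace (j - (j - S s))%nat with (S s) in Hback by lia.
  congruence.
Qed.

Lemma protected_S (k : nat) : protected k -> protected (S k).
Proof.
  intros IH Lam m p Hp0 Hpath y Hy j Hj.
  pose proof (shield_width_nonneg k).
  cbn [shield_width] in Hy.
  set (a := y - (2 * shield_width k + r)) in *.
  set (c := a + shield_width k + r).
  destruct (exists_last_index (fun t => ones_on (p t) a (c - 1)) j)
    as [t [Ht [Hleft Hafter]]].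
  { intros z Hz. rewrite (Hp0 z) by (apply Hy; lia). reflexivity. }
  assert (Hright : ones_on (p t) c y).
  { intros z Hz. apply (right_block_protected k IH Lam m p Hp0 Hpath a z); [lia | | lia | exact Hleft].
    intros x Hx. apply Hy. lia. }
  set (q := fun i => p (t + i)%nat).
  assert (Hq : legal_path U (fun x => Lam x /\ ~ (a <= x <= c - 1) /\ q 0%nat x = true)
                 k (j - t) q).
  { apply (legal_path_restrict U Lam (fun x => a <= x <= c - 1)).
    - apply (legal_path_forward U Lam (S k) m); [exact Hpath | lia].
    - intros i Hi.
      destruct (not_ones_on _ _ _ (Hafter (t + i)%nat ltac:(lia))) as [z0 [Hz0 Hf0]].
      exists z0. split; [apply Hy; lia|]. split; [lia | exact Hf0]. }
  assert (Hfwd : q (j - t)%nat y = true).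
  { apply (IH _ _ q (fun x Hx => proj2 (proj2 Hx)) Hq y); [|lia].
    intros z Hz. split; [apply Hy; lia|]. split; [lia|].
    unfold q. rewrite Nat.add_0_r. apply Hright. lia. }
  unfold q in Hfwd. replace (t + (j - t))%nat with j in Hfwd by lia.
  exact Hfwd.
Qed.

Lemma protected_all (n : nat) : protected n.
Proof. induction n; [apply protected_0 | apply protected_S, IHn]. Qed.

End Protection.

Theorem mainTheorem4 (U : update_family) (HU : is_update_family U)
  (Hstab : minus_one_stable U) (n : nat) (Lam : Z -> Prop)
  (HLam : forall x : Z,
      - range_r U * (2 ^ Z.of_nat n - 1) <= x <=
        range_r U * Z.of_nat n * 2 ^ (Z.of_nat n - 1) -> Lam x)
  (eta : config) (Heta : V U n Lam eta) :
  eta 0 = true.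
Proof.
  destruct Heta as [m [p [_ [Hp0 [Hpm [Hmoves Hzeroes]]]]]].
  pose proof (range_r_nonneg U) as Hr.
  assert (Hpow : 0 < 2 ^ Z.of_nat n) by (apply Z.pow_pos_nonneg; lia).
  assert (Hright : 0 <= range_r U * Z.of_nat n * 2 ^ (Z.of_nat n - 1)).
  { apply Z.mul_nonneg_nonneg; [apply Z.mul_nonneg_nonneg|apply Z.pow_nonneg]; lia. }
  assert (H0 : Lam 0) by (apply HLam; split; nia).
  rewrite <- (Hpm 0 H0).
  apply (protected_all U (range_r U) Hr (minus_one_stable_left_site U HU Hstab)
           (fun X HX => proj2 (HU X HX)) n Lam m p Hp0 (conj Hmoves Hzeroes) 0); [|lia].
  intros z Hz. apply HLam. rewrite shield_width_eq in Hz. lia.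
Qed.
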